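(* Let $S$ be a solid and let $x,y,z\in S$. Then $$xy+xz=x(y+z)\iff \Big(e(x)(y+z)=e(x)y+e(x)z\ \ \text{or}\ \ R(x)\le R(y)+R(z)\Big).$$
   Context: A solid is a set $S$ with two binary operations $+$ and $\cdot$ (written $xy$) and a binary relation $\le$ satisfying the following axioms (all variables range over $S$). (A1) $+$ is associative and commutative. (A2) For each $x$ there is $e$ with $x+e=x$ such that $e+f=e$ for every $f$ with $x+f=x$; this $e$ is unique and is denoted $e(x)$ (the magnitude of $x$). An element $x$ with $x=e(x)$ is called a magnitude. (A3) For each $x$ there is $s$ with $x+s=e(x)$ and $e(s)=e(x)$; it is unique and denoted $-x$; write $x-y$ for $x+(-y)$. (A4) $e(x+y)=e(x)$ or $e(x+y)=e(y)$. (M1) $\cdot$ is associative and commutative. (M2) For each $x\neq e(x)$ there is $u$ with $xu=x$ such that $uv=u$ for every $v$ with $xv=x$; it is unique and denoted $u(x)$. (M3) For each $x\ne e(x)$ there is $d$ with $xd=u(x)$ and $u(d)=u(x)$; it is unique and denoted $x^{-1}$; write $y/x$ for $yx^{-1}$. (M4) If $x\neq e(x)$ and $y\ne e(y)$ then $u(xy)=u(x)$ or $u(xy)=u(y)$. (O1) $\le$ is a total order (reflexive, antisymmetric, transitive, total); $x<y$ means $x\le y$ and $x\ne y$. (O2) $x\le y\Rightarrow x+z\le y+z$. (O3) $y+e(x)=e(x)\Rightarrow (y\le e(x)$ and $-y\le e(x))$. (O4) $(e(x)<x$ and $y\le z)\Rightarrow xy\le xz$. (O5) $e(y)\le y\le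 z\Rightarrow e(x)y\le e(x)z$. (AM1) For all $x,y$ there is $z$ with $e(x)y=e(z)$. (AM2) $e(xy)=e(x)y+e(y)x$. (AM3) If $x\ne e(x)$ then $e(u(x))=e(x)/x$. (AM4) (distributivity axiom) $xy+xz=x(y+z)+e(x)y+e(x)z$. (AM5) $-(xy)=(-x)y$. (E1) There is $m$ with $m+x=x$ for all $x$; it is unique, called zero and denoted $0$. (E2) There is $u$ with $ux=x$ for all $x$; it is unique, called one and denoted $1$. (E3) There is $M$ with $e(x)+M=M$ for all $x$. (E4) There is $x$ with $e(x)\ne 0$ and $e(x)\ne M$. (E5) For every $x$ there is $a$ with $x=a+e(x)$ and $e(a)=0$. (E6) If $x,y$ are magnitudes with $x<y$, there is $z$ with $z\ne e(z)$ and $x<z<y$. Further notation: $S^*=\{x\in S: x\ne e(x)\}$ (zeroless elements). $x$ is positive if $e(x)\le x$ and negative if $x<e(x)$; $|x|=x$ if $x$ is positive and $|x|=-x$ if $x$ is negative. $x$ is precise if $e(x)=0$. The relative uncertainty $R(x)$ is $e(u(x))$ if $x\ne e(x)$, and $M$ (from (E3)) if $x=e(x)$. *)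

From Stdlib Require Import Classical ClassicalEpsilon.

Set Implicit Arguments.

Record solid := Solid {
  car :> Type;
  add : car -> car -> car;
  mul : car -> car -> car;
  le  : car -> car -> Prop;
  (* the operations whose existence (and uniqueness) the axioms assert *)
  mag : car -> car;        (* e(x) *)
  opp : car -> car;
  unt : car -> car;        (* u(x), meaningful for x <> e(x) *)
  inv : car -> car;        (* x^-1, meaningful for x <> e(x) *)
  zero : car;
  one : car;
  top : car;               (* M from (E3) *)
  addA : forall x y z, add x (add y z) = add (add x y) z;
  addC : forall x y, add x y = add y x;
  mag_spec : forall x, add x (mag x) = x /\
      (forall f, add x f = x -> add (mag x) f = mag x);
  mag_uniq : forall x e, add x e = x ->
      (forall f, add x f = x -> add e f = e) -> e = mag x;
  opp_spec : forall x, add x (opp x) = mag x /\ mag (opp x) = mag x;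
  opp_uniq : forall x s, add x s = mag x -> mag s = mag x -> s = opp x;
  A4 : forall x y, mag (add x y) = mag x \/ mag (add x y) = mag y;
  mulA : forall x y z, mul x (mul y z) = mul (mul x y) z;
  mulC : forall x y, mul x y = mul y x;
  unt_spec : forall x, x <> mag x -> mul x (unt x) = x /\
      (forall v, mul x v = x -> mul (unt x) v = unt x);
  unt_uniq : forall x u, x <> mag x -> mul x u = x ->
      (forall v, mul x v = x -> mul u v = u) -> u = unt x;
  inv_spec : forall x, x <> mag x ->
      inv x <> mag (inv x) /\ mul x (inv x) = unt x /\ unt (inv x) = unt x;
  inv_uniq : forall x d, x <> mag x -> d <> mag d ->
      mul x d = unt x -> unt d = unt x -> d = inv x;
  M4 : forall x y, x <> mag x -> y <> mag y -> mul x y <> mag (mul x y) ->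
      unt (mul x y) = unt x \/ unt (mul x y) = unt y;
  le_refl : forall x, le x x;
  le_anti : forall x y, le x y -> le y x -> x = y;
  le_trans : forall x y z, le x y -> le y z -> le x z;
  le_total : forall x y, le x y \/ le y x;
  O2 : forall x y z, le x y -> le (add x z) (add y z);
  O3 : forall x y, add y (mag x) = mag x ->
      le y (mag x) /\ le (opp y) (mag x);
  O4 : forall x y z, (le (mag x) x /\ mag x <> x) -> le y z -> le (mul x y) (mul x z);
  O5 : forall x y z, le (mag y) y -> le y z -> le (mul (mag x) y) (mul (mag x) z);
  AM1 : forall x y, exists z, mul (mag x) y = mag z;
  AM2 : forall x y, mag (mul x y) = add (mul (mag x) y) (mul (mag y) x);
  AM3 : forall x, x <> mag x -> mag (unt x) = mul (mag x) (inv x);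
  AM4 : forall x y z, add (mul x y) (mul x z) =
      add (add (mul x (add y z)) (mul (mag x) y)) (mul (mag x) z);
  AM5 : forall x y, opp (mul x y) = mul (opp x) y;
  E1 : forall x, add zero x = x;
  E2 : forall x, mul one x = x;
  E3 : forall x, add (mag x) top = top;
  E4 : exists x, mag x <> zero /\ mag x <> top;
  E5 : forall x, exists a, x = add a (mag x) /\ mag a = zero;
  E6 : forall x y, x = mag x -> y = mag y -> (le x y /\ x <> y) ->
      exists z, z <> mag z /\ (le x z /\ x <> z) /\ (le z y /\ z <> y)
}.

Definition relunc (S : solid) (x : S) : S :=
  match excluded_middle_informative (x = mag S x) with
  | left _ => top S
  | right _ => mag S (unt S x)
  end.

(* By (AM4) and (AM2), [x y + x z = x (y + z)] says exactly that the magnitude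
   [e(x) y + e(x) z] is absorbed by [e(x (y + z)) = e(x) (y + z) + e(y + z) x], i.e. lies below it.
   This holds whenever [e(x)] distributes over [y + z], in particular when [y] or [z] is a
   magnitude.  Otherwise [y] and [z] are zeroless and cancel: they have opposite signs and are
   within a factor 2 of each other, so [B y = B z] for every magnitude [B].  Multiplying the
   remaining condition [e(x) y <= (e(y) + e(z)) x] by [x^-1] and [y^-1], and using that [u(w)]
   acts as the identity on magnitudes, turns it into [e(u(x)) <= e(u(y)) + e(u(z))], that is
   [R(x) <= R(y) + R(z)].  When [x] is a magnitude the condition reduces to distributivity of
   [e(x)], and [R(x) = M <= R(y) + R(z)] is impossible because relative uncertainties of
   zeroless elements are below [1]. *)
From Stdlib Require Import Classical ClassicalEpsilon.

Declare Scope solid_scope.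
Delimit Scope solid_scope with solid.
Notation "x + y" := (add _ x y) : solid_scope.
Notation "x * y" := (mul _ x y) : solid_scope.
Notation "x <= y" := (le _ x y) : solid_scope.
Notation "- x" := (opp _ x) : solid_scope.
Notation "'ε' x" := (mag _ x) (at level 1) : solid_scope.
Open Scope solid_scope.

Section Solid.
Context {S : solid}.

(** * Magnitudes and addition *)

Definition is_mag (m : S) := ε m = m.

Lemma mag_add_self (x : S) : ε x + ε x = ε x.
Proof. destruct (mag_spec S x) as [_ H]. apply H. apply (proj1 (mag_spec S x)). Qed.

Lemma mag_of_add_idem (u : S) : u + u = u -> ε u = u.
Proof. intro H. symmetry. apply mag_uniq; auto. Qed.

Lemma mag_mag (x : S) : ε (ε x) = ε x.
Proof. apply mag_of_add_idem, mag_add_self. Qed.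

Lemma is_mag_mag (x : S) : is_mag (ε x).
Proof. apply mag_mag. Qed.

Lemma add_mag (x : S) : x + ε x = x.
Proof. apply (proj1 (mag_spec S x)). Qed.

Lemma mag_absorb (x f : S) : x + f = x -> ε x + f = ε x.
Proof. apply (proj2 (mag_spec S x)). Qed.

Lemma mag_add (x y : S) : ε (x + y) = ε x + ε y.
Proof.
  assert (H1 : ε (x + y) + ε x = ε (x + y)).
  { apply mag_absorb. rewrite (addC S x y), <- addA, add_mag; auto. }
  assert (H2 : ε (x + y) + ε y = ε (x + y)).
  { apply mag_absorb. rewrite <- addA, add_mag; auto. }
  destruct (A4 S x y) as [H|H]; rewrite H in *.
  - rewrite H2; auto.
  - rewrite addC, H1; auto.
Qed.

Lemma add_mag_absorb_iff (x m : S) : is_mag m -> (x + m = x <-> m + ε x = ε x).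
Proof.
  intro Hm; split; intro H.
  - rewrite addC. apply mag_absorb; auto.
  - rewrite <- (add_mag x) at 1. rewrite <- addA, (addC S (ε x) m), H, add_mag; auto.
Qed.

Lemma le_of_absorb (m n : S) : is_mag n -> m + n = n -> m <= n.
Proof. intros Hn H. unfold is_mag in Hn. rewrite <- Hn in *. apply (O3 S n m H). Qed.

Lemma is_mag_add (m n : S) : is_mag m -> is_mag n -> is_mag (m + n).
Proof. unfold is_mag; intros Hm Hn. rewrite mag_add, Hm, Hn; auto. Qed.

Lemma add_mag_cases (m n : S) : is_mag m -> is_mag n -> m + n = m \/ m + n = n.
Proof. unfold is_mag; intros Hm Hn. destruct (A4 S m n) as [H|H]; rewrite mag_add, Hm, Hn in H; auto. Qed.

Lemma absorb_of_le (m n : S) : is_mag m -> is_mag n -> m <= n -> m + n = n.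
Proof.
  intros Hm Hn H. destruct (add_mag_cases m n Hm Hn) as [H1|H1]; auto.
  assert (n <= m) by (apply le_of_absorb; auto; rewrite addC; auto).
  assert (m = n) by (apply le_anti; auto). subst. auto.
Qed.

Lemma mag_zero : ε (zero S) = zero S.
Proof. apply mag_of_add_idem, E1. Qed.

Lemma zero_le_mag (m : S) : is_mag m -> zero S <= m.
Proof. intro Hm. apply le_of_absorb; auto. apply E1. Qed.

Lemma opp_opp (x : S) : - - x = x.
Proof.
  symmetry. apply opp_uniq.
  - rewrite addC, (proj1 (opp_spec S x)), (proj2 (opp_spec S x)); auto.
  - rewrite (proj2 (opp_spec S x)); auto.
Qed.

Lemma mag_opp (x : S) : ε (- x) = ε x.
Proof. apply (proj2 (opp_spec S x)). Qed.

Lemma add_opp (x : S) : x + - x = ε x.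
Proof. apply (proj1 (opp_spec S x)). Qed.

Lemma add_idem_mag (m : S) : is_mag m -> m + m = m.
Proof. unfold is_mag; intro Hm. pose proof (mag_add_self m) as H. rewrite Hm in H. auto. Qed.

Lemma opp_of_mag (m : S) : is_mag m -> - m = m.
Proof. intro Hm. symmetry. apply opp_uniq. rewrite add_idem_mag; auto. reflexivity. Qed.

Lemma opp_add (x y : S) : - (x + y) = - x + - y.
Proof.
  symmetry. apply opp_uniq.
  - rewrite mag_add, (addA S (x + y)), <- (addA S x y), (addC S y (- x)), addA, add_opp,
      <- addA, add_opp.
    auto.
  - rewrite !mag_add, !mag_opp. auto.
Qed.

Lemma addCA (x y z : S) : x + (y + z) = y + (x + z).
Proof. rewrite !addA, (addC S x y). auto. Qed.

(** * Order *)

Lemma le_add2l (x y z : S) : x <= y -> z + x <= z + y.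
Proof. intro H. rewrite !(addC S z). apply O2; auto. Qed.

Lemma le_add_magr (x m : S) : is_mag m -> x <= x + m.
Proof. intro Hm. pose proof (O2 S _ _ x (zero_le_mag m Hm)) as H. rewrite E1, addC in H. auto. Qed.

Lemma mag_le_opp_of_neg (x : S) : x <= ε x -> ε x <= - x.
Proof.
  intro H. pose proof (O2 S _ _ (- x) H) as H1. rewrite add_opp in H1.
  assert (E : ε x + - x = - x) by (rewrite addC, <- (mag_opp x), add_mag; auto).
  rewrite E in H1. auto.
Qed.

Lemma eq_mag_of_le_mag (x : S) : x <= ε x -> - x <= ε x -> x = ε x.
Proof.
  intros H1 H2. pose proof (mag_le_opp_of_neg x H1).
  assert (- x = ε x) by (apply le_anti; auto).
  rewrite <- (opp_opp x), H0, opp_of_mag; [rewrite mag_mag; auto | apply mag_mag].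
Qed.

Lemma pos_of_opp_le_mag (x : S) : - x <= ε x -> ε x <= x.
Proof.
  intro H. destruct (le_total S (ε x) x) as [H1|H1]; auto.
  pose proof (eq_mag_of_le_mag x H1 H) as E. rewrite <- E. apply le_refl.
Qed.

Lemma opp_pos_of_neg (x : S) : x <= ε x -> ε (- x) <= - x.
Proof. intro H. rewrite mag_opp. apply mag_le_opp_of_neg; auto. Qed.

Lemma opp_zeroless (x : S) : x <> ε x -> - x <> ε (- x).
Proof.
  intros H H1. apply H. rewrite mag_opp in H1.
  rewrite <- (opp_opp x), H1, opp_of_mag; [rewrite mag_mag; auto | apply mag_mag].
Qed.

Lemma absorbed_le (y m : S) : is_mag m -> y + m = m -> y <= m /\ - y <= m.
Proof. intros Hm H. unfold is_mag in Hm. rewrite <- Hm in *. apply O3; auto. Qed.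

Lemma absorbed_of_le (y m : S) : is_mag m -> y <= m -> - y <= m -> y + m = m.
Proof.
  intros Hm H1 H2.
  assert (He : ε y <= m).
  { pose proof (O2 S _ _ (- y) H1) as H3. rewrite add_opp in H3.
    pose proof (le_add2l _ _ m H2) as H4. rewrite add_idem_mag in H4; auto.
    eapply le_trans; [exact H3 | exact H4]. }
  assert (Hs : ε (y + m) = m).
  { rewrite mag_add, Hm. apply absorb_of_le; auto. apply mag_mag. }
  assert (A1 : y + m <= m).
  { pose proof (O2 S _ _ m H1) as H3. rewrite (add_idem_mag m Hm) in H3. exact H3. }
  assert (A2 : - (y + m) <= m).
  { rewrite opp_add, (opp_of_mag m Hm). pose proof (O2 S _ _ m H2) as H3.
    rewrite (add_idem_mag m Hm) in H3. exact H3. }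
  assert (B1 : y + m <= ε (y + m)) by (rewrite Hs; exact A1).
  assert (B2 : - (y + m) <= ε (y + m)) by (rewrite Hs; exact A2).
  pose proof (eq_mag_of_le_mag _ B1 B2) as H. rewrite H, Hs. reflexivity.
Qed.

Lemma opp_le_mag_of_pos (x : S) : ε x <= x -> - x <= ε x.
Proof.
  intro H. pose proof (O2 S _ _ (- x) H) as H1. rewrite add_opp in H1.
  assert (E : ε x + - x = - x) by (rewrite addC, <- (mag_opp x), add_mag; auto).
  rewrite E in H1. auto.
Qed.

Lemma add_mag_le_iff (a b c : S) : is_mag a -> is_mag b -> is_mag c ->
  (a + b <= c <-> a <= c /\ b <= c).
Proof.
  intros Ha Hb Hc. split.
  - intro H. split; eapply le_trans; try exact H.
    apply le_add_magr; auto. rewrite addC; apply le_add_magr; auto.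
  - intros [H1 H2]. destruct (add_mag_cases a b Ha Hb) as [E|E]; rewrite E; auto.
Qed.

Lemma le_add_mag_cases (a b c : S) : is_mag a -> is_mag b -> c <= a + b -> c <= a \/ c <= b.
Proof. intros Ha Hb H. destruct (add_mag_cases a b Ha Hb) as [E|E]; rewrite E in H; auto. Qed.

Lemma le_add_magl (a c : S) : is_mag a -> c <= a + c.
Proof. intro. rewrite addC. apply le_add_magr; auto. Qed.

Lemma le_add_pos (y z : S) : ε z <= z -> y <= y + z.
Proof. intro H. eapply le_trans; [apply (le_add_magr y (ε z)), is_mag_mag|]. apply le_add2l; auto. Qed.

(** * Multiplication *)

Lemma is_mag_mul_magl (m w : S) : is_mag m -> is_mag (m * w).
Proof.
  unfold is_mag; intro Hm. destruct (AM1 S m w) as [z Hz]. rewrite Hm in Hz. rewrite Hz. apply mag_mag.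
Qed.

Lemma is_mag_mul_magr (m w : S) : is_mag m -> is_mag (w * m).
Proof. intro. rewrite mulC. apply is_mag_mul_magl; auto. Qed.

Lemma mul1l (x : S) : one S * x = x.
Proof. apply E2. Qed.

Lemma mul1r (x : S) : x * one S = x.
Proof. rewrite mulC; apply E2. Qed.

Lemma mul_oppl (x y : S) : (- x) * y = - (x * y).
Proof. symmetry; apply AM5. Qed.

Lemma mul_oppr (x y : S) : x * (- y) = - (x * y).
Proof. rewrite mulC, mul_oppl, mulC; auto. Qed.

Lemma mul_mag_opp (m w : S) : is_mag m -> m * (- w) = m * w.
Proof. intro Hm. rewrite mul_oppr. apply opp_of_mag, is_mag_mul_magl; auto. Qed.

Lemma mul_mag_add_le (m y z : S) : is_mag m -> m * (y + z) <= m * y + m * z.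
Proof.
  intro Hm. pose proof (AM4 S m y z) as H. unfold is_mag in Hm. rewrite Hm in H.
  rewrite <- addA in H. apply le_of_absorb.
  - apply is_mag_add; apply is_mag_mul_magl; auto.
  - symmetry; auto.
Qed.

Lemma mag_mul_le (m w : S) : is_mag m -> ε w * m <= m * w.
Proof.
  intro Hm. pose proof (AM2 S m w) as H. pose proof (is_mag_mul_magl m w Hm) as H1.
  unfold is_mag in *. rewrite H1, Hm in H. apply le_of_absorb; auto.
  rewrite addC; symmetry; auto.
Qed.

Lemma mul_magl_le_pos (m y z : S) : is_mag m -> ε y <= y -> y <= z -> m * y <= m * z.
Proof. intros Hm H1 H2. pose proof (O5 S m y z H1 H2) as H. unfold is_mag in Hm. rewrite Hm in H. auto. Qed.

Lemma le_mul2l_mag (w m n : S) : is_mag m -> is_mag n -> m <= n -> w * m <= w * n.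
Proof.
  intros Hm Hn H. destruct (classic (w = ε w)) as [Hw|Hw].
  - rewrite Hw. apply mul_magl_le_pos; auto. apply is_mag_mag. unfold is_mag in Hm; rewrite Hm; apply le_refl.
  - destruct (le_total S (ε w) w) as [Hp|Hp].
    + apply (O4 S m n (conj Hp (fun e => Hw (eq_sym e))) H).
    + pose proof (O4 S m n (conj (opp_pos_of_neg w Hp) (fun e => opp_zeroless w Hw (eq_sym e))) H) as H1.
      rewrite !mul_oppl in H1. rewrite !opp_of_mag in H1; auto; apply is_mag_mul_magr; auto.
Qed.

Lemma mul_add_mags (w m n : S) : is_mag m -> is_mag n -> w * (m + n) = w * m + w * n.
Proof.
  intros Hm Hn. destruct (le_total S m n) as [H|H].
  - rewrite (absorb_of_le m n Hm Hn H). symmetry.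
    apply absorb_of_le; try apply is_mag_mul_magr; auto. apply le_mul2l_mag; auto.
  - rewrite (addC S m n), (absorb_of_le n m Hn Hm H), (addC S (w * m)). symmetry.
    apply absorb_of_le; try apply is_mag_mul_magr; auto. apply le_mul2l_mag; auto.
Qed.

Lemma mul_absorbed (w y m : S) : is_mag m -> y + m = m -> w * y + w * m = w * m.
Proof.
  intros Hm H. pose proof (AM4 S w y m) as H1. rewrite H in H1. rewrite H1.
  rewrite <- addA. apply add_mag_absorb_iff. apply is_mag_add; apply is_mag_mul_magl; apply is_mag_mag.
  rewrite (is_mag_mul_magr m w Hm). apply absorb_of_le.
  - apply is_mag_add; apply is_mag_mul_magl; apply is_mag_mag.
  - apply is_mag_mul_magr; auto.
  - destruct (absorbed_le y m Hm H) as [Hy1 Hy2].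
    assert (Hb : ε w * y <= ε w * m).
    { destruct (le_total S (ε y) y) as [Hp|Hp].
      - apply O5; auto.
      - rewrite <- (mul_mag_opp (ε w) y); [|apply is_mag_mag]. apply O5; auto. apply opp_pos_of_neg; auto. }
    assert (Hc : ε w * m <= w * m) by (rewrite (mulC S w); apply mag_mul_le; auto).
    rewrite (absorb_of_le (ε w * y) (ε w * m)); try apply is_mag_mul_magl; try apply is_mag_mag; auto.
Qed.

Lemma mag_one_mul_le (y : S) : ε (one S) * y <= ε y.
Proof.
  pose proof (AM4 S (one S) y (- y)) as H.
  rewrite !mul1l, add_opp, mul_mag_opp in H; [|apply is_mag_mag].
  rewrite <- addA, (add_idem_mag (ε (one S) * y)) in H; [|apply is_mag_mul_magl, is_mag_mag].
  apply le_of_absorb. apply is_mag_mag. rewrite addC. symmetry. auto.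
Qed.

Lemma mulCA (x y z : S) : x * (y * z) = y * (x * z).
Proof. rewrite !mulA, (mulC S x y). auto. Qed.

Lemma mul_mag_add_magl (N y z : S) : is_mag N -> is_mag y -> N * (y + z) = N * y + N * z.
Proof.
  intros HN Hy. apply le_anti. apply mul_mag_add_le; auto.
  apply add_mag_le_iff; try apply is_mag_mul_magl; auto; try apply is_mag_add; auto.
  split.
  - eapply le_trans; [apply (le_mul2l_mag N y (ε (y + z))); auto; try apply is_mag_mag|].
    + rewrite mag_add, Hy. apply le_add_magr, is_mag_mag.
    + rewrite mulC. apply mag_mul_le; auto.
  - destruct (le_total S (ε z) z) as [H|H].
    + apply mul_magl_le_pos; auto. apply le_add_magl; auto.
    + rewrite <- (mul_mag_opp N z HN), <- (mul_mag_opp N (y + z) HN).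
      apply mul_magl_le_pos; auto. apply opp_pos_of_neg; auto.
      rewrite opp_add, (opp_of_mag y Hy). apply le_add_magl; auto.
Qed.

Lemma mul_mag_double_le (m y : S) : is_mag m -> m * (y + y) <= m * y.
Proof.
  intro Hm. eapply le_trans; [apply mul_mag_add_le; auto|].
  rewrite add_idem_mag; [apply le_refl | apply is_mag_mul_magl; auto].
Qed.

(** * Units *)

Lemma mag_mul_idem (p : S) : p * p = p -> ε p * p = ε p.
Proof.
  intro H. pose proof (AM2 S p p) as H1. rewrite H in H1.
  rewrite add_idem_mag in H1; [auto | apply is_mag_mul_magl, is_mag_mag].
Qed.

Lemma idem_pos (p : S) : p <> ε p -> p * p = p -> ε p <= p.
Proof.
  intros Hz H. pose proof (mag_mul_idem p H) as HK.
  destruct (le_total S (ε p) p) as [Hp|Hp]; auto.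
  pose proof (O4 S p (ε p) (conj (opp_pos_of_neg p Hp) (fun e => opp_zeroless p Hz (eq_sym e))) Hp) as H1.
  rewrite mul_oppl, H, mul_oppl, (mulC S p), HK, (opp_of_mag (ε p) (is_mag_mag p)) in H1.
  exfalso. apply Hz. apply eq_mag_of_le_mag; auto.
Qed.

Lemma one_zeroless (w : S) : w <> ε w -> one S <> ε (one S).
Proof.
  intros Hw H. apply Hw. rewrite <- (mul1l w), H. symmetry. apply is_mag_mul_magl, is_mag_mag.
Qed.

Lemma one_pos (w : S) : w <> ε w -> ε (one S) <= one S.
Proof. intro Hw. apply idem_pos. apply (one_zeroless w Hw). apply mul1l. Qed.

Lemma mul_unt (w : S) (Hw : w <> ε w) : w * unt S w = w.
Proof. apply (proj1 (unt_spec S Hw)). Qed.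

Lemma unt_idem (w : S) (Hw : w <> ε w) : unt S w * unt S w = unt S w.
Proof. apply (proj2 (unt_spec S Hw)). apply mul_unt; auto. Qed.

Lemma unt_zeroless (w : S) (Hw : w <> ε w) : unt S w <> ε (unt S w).
Proof.
  intro H. apply Hw. rewrite <- (mul_unt w Hw), mulC, H. symmetry. apply is_mag_mul_magl, is_mag_mag.
Qed.

Lemma unt_pos (w : S) (Hw : w <> ε w) : ε (unt S w) <= unt S w.
Proof. apply idem_pos. apply unt_zeroless; auto. apply unt_idem; auto. Qed.

Lemma mag_unt_mul_unt (w : S) (Hw : w <> ε w) : ε (unt S w) * unt S w = ε (unt S w).
Proof. apply mag_mul_idem, unt_idem; auto. Qed.

(* With [t := 1 - u], [u t] is absorbed by [e(u)]; if [u <= t] then [1 <= t + t] would give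
   [u <= u (t + t) <= e(u)], making [u] a magnitude. *)
Lemma one_le_unt_add_unt (w : S) (Hw : w <> ε w) : one S <= unt S w + unt S w.
Proof.
  set (u := unt S w). set (t := one S + - u).
  assert (Hu : u <> ε u) by apply (unt_zeroless w Hw).
  assert (Hup : ε u <= u) by apply (unt_pos w Hw).
  assert (HR : ε u * u = ε u) by apply (mag_unt_mul_unt w Hw).
  assert (Huu : u * u = u) by apply (unt_idem w Hw).
  assert (Hut : u * t + ε u = ε u).
  { pose proof (AM4 S u (one S) (- u)) as H. fold t in H.
    rewrite mul1r, mul_oppr, Huu, add_opp, mul1r, mul_mag_opp, HR in H; [|apply is_mag_mag].
    rewrite <- addA, add_idem_mag in H; [|apply is_mag_mag]. auto. }
  assert (Hsum : u + t = one S + ε u) by (unfold t; rewrite addCA, add_opp; auto).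
  assert (H1 : one S <= u + t) by (rewrite Hsum; apply le_add_magr, is_mag_mag).
  destruct (le_total S t u) as [H|H].
  - eapply le_trans; [exact H1|]. apply le_add2l; auto.
  - exfalso.
    assert (H2 : one S <= t + t) by (eapply le_trans; [exact H1| apply O2; auto]).
    pose proof (O4 S (one S) (t + t) (conj Hup (fun e => Hu (eq_sym e))) H2) as H3.
    rewrite mul1r in H3.
    assert (HRt : ε u * t + ε u = ε u).
    { apply absorb_of_le; try apply is_mag_mul_magl; try apply is_mag_mag.
      unfold t. eapply le_trans; [apply mul_mag_add_le, is_mag_mag|].
      rewrite mul1r, mul_mag_opp, HR, add_idem_mag; try apply is_mag_mag. apply le_refl. }
    assert (HX : u * (t + t) + ε u = ε u).
    { pose proof (AM4 S u t t) as H4.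
      assert (H5 : u * t + u * t + ε u = ε u) by (rewrite <- addA, !Hut; auto).
      rewrite H4 in H5. rewrite <- H5 at 2.
      rewrite <- !addA. f_equal. f_equal. rewrite HRt, HRt. auto. }
    destruct (absorbed_le _ _ (is_mag_mag u) HX) as [H6 _].
    apply Hu. apply le_anti; auto. eapply le_trans; eauto.
Qed.

Lemma le_mul_unt_mag (w m : S) (Hw : w <> ε w) : is_mag m -> m <= m * unt S w.
Proof.
  intro Hm. pose proof (mul_magl_le_pos m _ _ Hm (one_pos w Hw) (one_le_unt_add_unt w Hw)) as H.
  rewrite mul1r in H. eapply le_trans; [exact H|].
  apply mul_mag_double_le; auto.
Qed.

Lemma mag_one_le_mag_unt (w : S) (Hw : w <> ε w) : ε (one S) <= ε (unt S w).
Proof.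
  eapply le_trans; [apply (le_mul_unt_mag w); auto; apply is_mag_mag|]. apply mag_one_mul_le.
Qed.

Lemma opp_one_le_mag_one (w : S) (Hw : w <> ε w) : - one S <= ε (one S).
Proof. apply opp_le_mag_of_pos, (one_pos w Hw). Qed.

Lemma unt_eq_one_add_mag (w : S) : w <> ε w -> one S <= unt S w -> unt S w = one S + ε (unt S w).
Proof.
  intros Hw H. set (u := unt S w). set (s := u + - one S).
  assert (HR : ε u * u = ε u) by apply (mag_unt_mul_unt w Hw).
  assert (Huu : u * u = u) by apply (unt_idem w Hw).
  assert (HE : ε (one S) + ε u = ε u).
  { apply absorb_of_le; try apply is_mag_mag. apply (mag_one_le_mag_unt w Hw). }
  assert (Hus : u * s + ε u = ε u).
  { pose proof (AM4 S u u (- one S)) as H1. fold s in H1.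
    rewrite Huu, mul_oppr, mul1r, add_opp, HR, mul_mag_opp, mul1r in H1; [|apply is_mag_mag].
    rewrite <- addA, add_idem_mag in H1; [|apply is_mag_mag]. auto. }
  assert (HEs : ε (one S) <= s).
  { pose proof (O2 S _ _ (- one S) H) as H1. rewrite add_opp in H1. auto. }
  assert (Hms : ε s = ε u) by (unfold s; rewrite mag_add, mag_opp, addC; auto).
  assert (Hns : - s <= ε s).
  { pose proof (O2 S _ _ (- s) HEs) as H1. rewrite add_opp in H1.
    assert (E : ε (one S) + - s = - s).
    { rewrite addC. apply add_mag_absorb_iff. apply is_mag_mag. rewrite mag_opp, Hms. auto. }
    rewrite E in H1. auto. }
  assert (Hps : ε s <= s) by (apply pos_of_opp_le_mag; auto).
  assert (Hsle : s <= ε u).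
  { destruct (classic (s = ε s)) as [E|E].
    - rewrite <- Hms, <- E. apply le_refl.
    - pose proof (O4 S (one S) u (conj Hps (fun e => E (eq_sym e))) H) as H1.
      rewrite mul1r in H1. eapply le_trans; [exact H1|]. rewrite mulC.
      apply (absorbed_le _ _ (is_mag_mag u) Hus). }
  assert (Hsin : s + ε u = ε u) by (apply absorbed_of_le; [apply is_mag_mag | auto | rewrite <- Hms; auto]).
  rewrite <- Hsin. unfold s.
  rewrite addCA, <- addA, (addA S (- one S)), (addC S (- one S)), add_opp, HE, add_mag. auto.
Qed.

Lemma mul_unt_mag_le (w m : S) (Hw : w <> ε w) : is_mag m -> m * unt S w <= m.
Proof.
  intro Hm. set (u := unt S w).
  destruct (le_total S u (one S)) as [H|H].
  - pose proof (mul_magl_le_pos m _ _ Hm (unt_pos w Hw) H) as H1. rewrite mul1r in H1. auto.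
  - pose proof (unt_eq_one_add_mag w Hw H) as Hu1. fold u in Hu1.
    assert (HR1 : ε u <= one S).
    { destruct (le_total S (ε u) (one S)) as [H1|H1]; auto. exfalso. apply (unt_zeroless w Hw).
      assert (H2 : one S + ε u = ε u).
      { apply absorbed_of_le; [apply is_mag_mag | exact H1 |].
        eapply le_trans; [apply (opp_one_le_mag_one w Hw) | apply (mag_one_le_mag_unt w Hw)]. }
      fold u. rewrite Hu1 at 1. rewrite H2. auto. }
    rewrite Hu1. eapply le_trans; [apply mul_mag_add_le; auto|]. rewrite mul1r.
    assert (Hx : ε (ε u) <= ε u) by (rewrite mag_mag; apply le_refl).
    pose proof (mul_magl_le_pos m _ _ Hm Hx HR1) as H1. rewrite mul1r in H1.
    rewrite addC, absorb_of_le; [apply le_refl | apply is_mag_mul_magl; auto | auto | auto].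
Qed.

Lemma mul_unt_mag (w m : S) (Hw : w <> ε w) : is_mag m -> m * unt S w = m.
Proof. intro Hm. apply le_anti; [apply mul_unt_mag_le | apply le_mul_unt_mag]; auto. Qed.

Lemma not_one_le_mag_unt (w : S) (Hw : w <> ε w) : ~ (one S <= ε (unt S w)).
Proof.
  intro H.
  assert (H2 : one S + ε (unt S w) = ε (unt S w)).
  { apply absorbed_of_le; auto. apply is_mag_mag.
    eapply le_trans; [apply (opp_one_le_mag_one w Hw) | apply (mag_one_le_mag_unt w Hw)]. }
  pose proof (mul_absorbed (unt S w) _ _ (is_mag_mag _) H2) as H3.
  rewrite mul1r, mulC, (mag_unt_mul_unt w Hw), add_mag in H3. apply (unt_zeroless w Hw). exact H3.
Qed.

Lemma mul_inv (x : S) (Hx : x <> ε x) : x * inv S x = unt S x.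
Proof. apply (proj1 (proj2 (inv_spec S Hx))). Qed.

Lemma mag_unt_eq (x : S) (Hx : x <> ε x) : ε (unt S x) = ε x * inv S x.
Proof. apply AM3; auto. Qed.

(** * The top element *)

Lemma mag_le_mag_top (y : S) : ε y <= ε (top S).
Proof.
  apply le_of_absorb; [apply is_mag_mag|].
  rewrite addC. apply mag_absorb. rewrite addC. apply E3.
Qed.

Lemma exists_zeroless_absorbed_top : exists z : S, z <> ε z /\ z + ε (top S) = ε (top S).
Proof.
  set (M := ε (top S)).
  assert (HMm : is_mag M) by apply is_mag_mag.
  assert (HM0 : zero S <> M).
  { intro E. destruct (E4 S) as [y [Hy _]]. apply Hy. apply le_anti.
    - rewrite E. apply mag_le_mag_top.
    - apply zero_le_mag, is_mag_mag. }
  destruct (E6 S (eq_sym mag_zero) (eq_sym HMm) (conj (zero_le_mag M HMm) HM0))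
    as [z [Hz [[Hz1 _] [Hz2 _]]]].
  exists z. split; [exact Hz|]. apply absorbed_of_le; [exact HMm | exact Hz2 |].
  eapply le_trans; [|apply (mag_le_mag_top z)].
  pose proof (O2 S _ _ (- z) Hz1) as H. rewrite E1, add_opp in H. auto.
Qed.

Lemma mul_unt_absorbed_top (y z : S) : z <> ε z -> z + ε (top S) = ε (top S) ->
  y * unt S z + ε (top S) = ε (top S).
Proof.
  intros Hz HzM. set (M := ε (top S)). fold M in HzM.
  assert (HMm : is_mag M) by apply is_mag_mag.
  set (w := y * inv S z).
  pose proof (mul_absorbed w z M HMm HzM) as H1.
  assert (H3 : w * M + M = M).
  { apply absorb_of_le; [apply is_mag_mul_magr; auto | auto |].
    rewrite <- (is_mag_mul_magr M w HMm). apply mag_le_mag_top. }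
  assert (Hwz : w * z = y * unt S z).
  { unfold w. rewrite <- mulA, (mulC S (inv S z)), (mul_inv z Hz). auto. }
  rewrite <- Hwz, <- H3, addA, H1. auto.
Qed.

Lemma le_mag_top (y : S) : y <= ε (top S).
Proof.
  set (M := ε (top S)).
  assert (HMm : is_mag M) by apply is_mag_mag.
  destruct (le_total S y M) as [H|H]; auto.
  assert (Hp : ε y <= y) by (eapply le_trans; [apply mag_le_mag_top | exact H]).
  destruct (classic (y = ε y)) as [E|E]; [rewrite E; apply mag_le_mag_top|].
  destruct exists_zeroless_absorbed_top as [z [Hz HzM]].
  pose proof (mul_unt_absorbed_top y z Hz HzM) as H2. fold M in H2.
  assert (H4 : y * (unt S z + unt S z) + M = M).
  { assert (H5 : y * unt S z + y * unt S z + M = M) by (rewrite <- addA, H2, H2; auto).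
    rewrite (AM4 S y (unt S z) (unt S z)) in H5.
    assert (HK : ε y * unt S z + M = M).
    { apply absorb_of_le; auto; [apply is_mag_mul_magl, is_mag_mag|].
      rewrite <- (is_mag_mul_magl _ (unt S z) (is_mag_mag y)). apply mag_le_mag_top. }
    rewrite <- !addA, HK, HK in H5. exact H5. }
  destruct (absorbed_le _ _ HMm H4) as [H5 _].
  pose proof (O4 S (one S) _ (conj Hp (fun e => E (eq_sym e))) (one_le_unt_add_unt z Hz)) as H6.
  rewrite mul1r in H6. eapply le_trans; eauto.
Qed.

Lemma le_top (x : S) : x <= top S.
Proof.
  assert (H : forall y : S, y + ε (top S) = ε (top S)).
  { intro y. apply absorbed_of_le. apply is_mag_mag. apply le_mag_top. apply le_mag_top. }
  assert (Ht : top S = ε (top S))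
    by (transitivity (top S + ε (top S)); [symmetry; apply add_mag | apply H]).
  rewrite Ht. apply le_mag_top.
Qed.

(** * Distributivity *)

Lemma mul_add_iff (x y z : S) :
  x * y + x * z = x * (y + z) <->
  ε x * y + ε x * z <= ε x * (y + z) + (ε y + ε z) * x.
Proof.
  rewrite <- mag_add, (AM4 S x y z), <- addA, <- (AM2 S x (y + z)).
  assert (Hq : is_mag (ε x * y + ε x * z)) by (apply is_mag_add; apply is_mag_mul_magl, is_mag_mag).
  rewrite (add_mag_absorb_iff _ _ Hq). split; intro H.
  - apply le_of_absorb; auto. apply is_mag_mag.
  - apply absorb_of_le; auto. apply is_mag_mag.
Qed.

Lemma mag_mul_add_iff (x y z : S) :
  ε x * (y + z) = ε x * y + ε x * z <-> ε x * y + ε x * z <= ε x * (y + z).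
Proof.
  split; intro H.
  - rewrite <- H. apply le_refl.
  - apply le_anti; auto. apply mul_mag_add_le, is_mag_mag.
Qed.

Lemma zeroless_of_not_mag_distr (x y z : S) :
  ~ ε x * y + ε x * z <= ε x * (y + z) -> y <> ε y /\ z <> ε z.
Proof.
  intro HQ. split; intro Hm; apply HQ.
  - rewrite mul_mag_add_magl; [apply le_refl | apply is_mag_mag | symmetry; exact Hm].
  - rewrite (addC S y z), (addC S (ε x * y)), mul_mag_add_magl;
      [apply le_refl | apply is_mag_mag | symmetry; exact Hm].
Qed.

(* If [N y] is not below [N (y + z)], then [z] is negative and [y] and [- z] lie within a
   factor 2 of each other, which no magnitude can detect since [B (w + w) <= B w]. *)
Lemma mag_mul_eq_of_not_le_pos (N B y z : S) : is_mag N -> is_mag B -> ε y <= y ->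
  ~ N * y <= N * (y + z) -> B * z = B * y.
Proof.
  intros HN HB Hy Hc.
  destruct (le_total S (ε z) z) as [Hz|Hz].
  { exfalso. apply Hc. apply mul_magl_le_pos; auto. apply le_add_pos; auto. }
  assert (Hz' : ε (- z) <= - z) by (apply opp_pos_of_neg; auto).
  rewrite <- (mul_mag_opp B z HB). apply le_anti.
  - destruct (le_total S (- z) (y + y)) as [H|H].
    + eapply le_trans; [apply mul_magl_le_pos; eauto|]. apply mul_mag_double_le; auto.
    + exfalso. apply Hc. pose proof (O2 S _ _ (- y) H) as H1.
      rewrite <- addA, add_opp, add_mag, (addC S (- z)), <- opp_add in H1.
      rewrite <- (mul_mag_opp N (y + z) HN). apply mul_magl_le_pos; auto.
  - destruct (le_total S y (- z + - z)) as [H|H].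
    + eapply le_trans; [apply mul_magl_le_pos; eauto|]. apply mul_mag_double_le; auto.
    + exfalso. apply Hc. pose proof (O2 S _ _ z H) as H1.
      rewrite <- addA, (addC S (- z) z), add_opp, <- (mag_opp z), add_mag in H1.
      pose proof (O2 S _ _ (y + z) H1) as H2.
      rewrite addCA, (addC S (- z) z), add_opp in H2.
      eapply le_trans; [|apply (mul_mag_double_le N (y + z) HN)]. apply mul_magl_le_pos; auto.
      eapply le_trans; [|exact H2]. apply le_add_magr, is_mag_mag.
Qed.

Lemma mag_mul_eq_of_not_le (N B y z : S) : is_mag N -> is_mag B ->
  ~ N * y <= N * (y + z) -> B * z = B * y.
Proof.
  intros HN HB Hc. destruct (le_total S (ε y) y) as [Hy|Hy].
  - apply mag_mul_eq_of_not_le_pos with N; auto.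
  - rewrite <- (mul_mag_opp B z HB), <- (mul_mag_opp B y HB).
    apply mag_mul_eq_of_not_le_pos with N; auto.
    + apply opp_pos_of_neg; auto.
    + rewrite <- opp_add, !(mul_mag_opp N _ HN). auto.
Qed.

Lemma mul_mag_inv_eq (B y z : S) : y <> ε y -> z <> ε z -> is_mag B ->
  B * z = B * y -> B * inv S y = B * inv S z.
Proof.
  intros Hy Hz HB H.
  transitivity (inv S y * inv S z * (B * z)).
  - rewrite mulCA, <- !mulA, (mulC S (inv S z) z), (mul_inv z Hz), mulA, mul_unt_mag; auto.
    apply is_mag_mul_magl; auto.
  - rewrite H, (mulC S (inv S y) (inv S z)), mulCA, <- !mulA, (mulC S (inv S y) y), (mul_inv y Hy),
      mulA, mul_unt_mag; auto.
    apply is_mag_mul_magl; auto.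
Qed.

Lemma relunc_le_of_mag_mul_le (x y z : S) : x <> ε x -> y <> ε y -> z <> ε z ->
  ~ ε x * y <= ε x * (y + z) -> ε x * y <= (ε y + ε z) * x ->
  ε (unt S x) <= ε (unt S y) + ε (unt S z).
Proof.
  intros Hx Hy Hz Hc H.
  assert (HAB : is_mag (ε y + ε z)) by (apply is_mag_add; apply is_mag_mag).
  pose proof (le_mul2l_mag (inv S x) _ _ (is_mag_mul_magl _ y (is_mag_mag x))
                (is_mag_mul_magl _ x HAB) H) as H1.
  rewrite mulCA, mulA, <- (mag_unt_eq x Hx), (mulCA (inv S x)), (mulC S (inv S x) x), (mul_inv x Hx),
    (mul_unt_mag x _ Hx HAB) in H1.
  pose proof (le_mul2l_mag (inv S y) _ _ (is_mag_mul_magl _ y (is_mag_mag _)) HAB H1) as H2.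
  rewrite mulCA, (mulC S (inv S y) y), (mul_inv y Hy), (mul_unt_mag y _ Hy (is_mag_mag _)) in H2.
  rewrite mul_add_mags, (mulC S (inv S y) (ε y)), <- (mag_unt_eq y Hy) in H2; try apply is_mag_mag.
  eapply le_trans; [exact H2|]. apply le_add2l. rewrite mulC, (mag_unt_eq z Hz).
  rewrite (mul_mag_inv_eq (ε z) y z Hy Hz (is_mag_mag z)); [apply le_refl|].
  apply (mag_mul_eq_of_not_le (ε x) (ε z) y z (is_mag_mag x) (is_mag_mag z) Hc).
Qed.

Lemma mag_mul_le_of_relunc_le (x y z : S) : x <> ε x -> y <> ε y -> z <> ε z ->
  ~ ε x * y <= ε x * (y + z) -> ε (unt S x) <= ε (unt S y) + ε (unt S z) ->
  ε x * y + ε x * z <= ε x * (y + z) + (ε y + ε z) * x.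
Proof.
  intros Hx Hy Hz Hc H.
  assert (HAB : is_mag (ε y + ε z)) by (apply is_mag_add; apply is_mag_mag).
  assert (Hzy : ε (unt S z) = ε z * inv S y).
  { rewrite (mag_unt_eq z Hz). apply mul_mag_inv_eq; auto; [apply is_mag_mag|].
    symmetry. apply (mag_mul_eq_of_not_le (ε x) (ε z) y z (is_mag_mag x) (is_mag_mag z) Hc). }
  assert (H2 : ε (unt S x) <= (ε y + ε z) * inv S y).
  { eapply le_trans; [exact H|]. rewrite (mulC S _ (inv S y)), mul_add_mags; try apply is_mag_mag.
    rewrite (mulC S (inv S y) (ε y)), <- (mag_unt_eq y Hy), (mulC S (inv S y)), Hzy. apply le_refl. }
  pose proof (le_mul2l_mag y _ _ (is_mag_mag _) (is_mag_mul_magl _ _ HAB) H2) as H3.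
  rewrite mulCA, (mul_inv y Hy), (mul_unt_mag y _ Hy HAB) in H3.
  pose proof (le_mul2l_mag x _ _ (is_mag_mul_magr _ _ (is_mag_mag _)) HAB H3) as H4.
  rewrite (mag_unt_eq x Hx), (mulCA x y), (mulCA x (ε x)), (mul_inv x Hx), mulCA, mulA, (mul_unt_mag x _ Hx),
    (mulC S x) in H4; [| apply is_mag_mul_magl, is_mag_mag].
  rewrite (mag_mul_eq_of_not_le (ε x) (ε x) y z (is_mag_mag x) (is_mag_mag x) Hc),
    (add_idem_mag _ (is_mag_mul_magl _ _ (is_mag_mag x))).
  eapply le_trans; [exact H4|]. apply le_add_magl. apply is_mag_mul_magl, is_mag_mag.
Qed.

Lemma mag_distr_criterion_l (x y z : S) : x <> ε x -> y <> ε y -> z <> ε z ->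
  ~ ε x * y <= ε x * (y + z) ->
  (ε x * y + ε x * z <= ε x * (y + z) + (ε y + ε z) * x <->
   ε (unt S x) <= ε (unt S y) + ε (unt S z)).
Proof.
  intros Hx Hy Hz Hc. split; [intro H | apply mag_mul_le_of_relunc_le; auto].
  apply relunc_le_of_mag_mul_le; auto.
  assert (Hy_le : ε x * y <= ε x * (y + z) + (ε y + ε z) * x).
  { eapply le_trans; [|exact H]. apply le_add_magr, is_mag_mul_magl, is_mag_mag. }
  destruct (le_add_mag_cases _ _ _ (is_mag_mul_magl _ _ (is_mag_mag x))
              (is_mag_mul_magl _ _ (is_mag_add _ _ (is_mag_mag y) (is_mag_mag z))) Hy_le);
    tauto.
Qed.

Lemma mag_distr_criterion (x y z : S) : x <> ε x -> y <> ε y -> z <> ε z ->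
  ~ ε x * y + ε x * z <= ε x * (y + z) ->
  (ε x * y + ε x * z <= ε x * (y + z) + (ε y + ε z) * x <->
   ε (unt S x) <= ε (unt S y) + ε (unt S z)).
Proof.
  intros Hx Hy Hz HQ.
  destruct (classic (ε x * y <= ε x * (y + z))) as [Hyl|Hyl].
  2: now apply mag_distr_criterion_l.
  assert (Hzl : ~ ε x * z <= ε x * (z + y)).
  { intro Hzl. apply HQ. rewrite (addC S z y) in Hzl.
    apply add_mag_le_iff; auto; apply is_mag_mul_magl, is_mag_mag. }
  rewrite (addC S y z), (addC S (ε x * y)), (addC S (ε y)), (addC S (ε (unt S y))).
  now apply mag_distr_criterion_l.
Qed.

Lemma not_top_le_mag_unt_add (y z : S) : y <> ε y -> z <> ε z ->
  ~ top S <= ε (unt S y) + ε (unt S z).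
Proof.
  intros Hy Hz H.
  destruct (le_add_mag_cases _ _ _ (is_mag_mag _) (is_mag_mag _) (le_trans S _ _ _ (le_top (one S)) H))
    as [H1|H1].
  - exact (not_one_le_mag_unt y Hy H1).
  - exact (not_one_le_mag_unt z Hz H1).
Qed.

Lemma mag_mul_le_of_mag (x w : S) : x = ε x -> ε w * x <= ε x * w.
Proof. intro Hx. rewrite Hx at 1. apply mag_mul_le, is_mag_mag. Qed.

Lemma relunc_zeroless (x : S) : x <> ε x -> relunc S x = ε (unt S x).
Proof. intro H. unfold relunc. destruct (excluded_middle_informative (x = mag S x)); tauto. Qed.

Lemma relunc_of_mag (x : S) : x = ε x -> relunc S x = top S.
Proof. intro H. unfold relunc. destruct (excluded_middle_informative (x = mag S x)); tauto. Qed.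

End Solid.

Theorem mainTheorem1 (S : solid) (x y z : S) :
  add S (mul S x y) (mul S x z) = mul S x (add S y z) <->
  (mul S (mag S x) (add S y z) = add S (mul S (mag S x) y) (mul S (mag S x) z)
   \/ le S (relunc S x) (add S (relunc S y) (relunc S z))).
Proof.
  rewrite mul_add_iff, mag_mul_add_iff.
  destruct (classic (ε x * y + ε x * z <= ε x * (y + z))) as [HQ|HQ].
  { split; [now left | intros _].
    eapply le_trans; [exact HQ|].
    apply le_add_magr, is_mag_mul_magl, is_mag_add; apply is_mag_mag. }
  destruct (zeroless_of_not_mag_distr x y z HQ) as [Hy Hz].
  rewrite (relunc_zeroless y Hy), (relunc_zeroless z Hz).
  destruct (classic (x = ε x)) as [Hx|Hx].
  - assert (HT : (ε y + ε z) * x <= ε x * (y + z))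
      by (rewrite <- mag_add; apply mag_mul_le_of_mag, Hx).
    rewrite (relunc_of_mag x Hx), (addC S (ε x * (y + z))),
      (absorb_of_le _ _ (is_mag_mul_magl _ x (is_mag_add _ _ (is_mag_mag y) (is_mag_mag z)))
         (is_mag_mul_magl _ _ (is_mag_mag x)) HT).
    pose proof (not_top_le_mag_unt_add y z Hy Hz). tauto.
  - rewrite (relunc_zeroless x Hx), mag_distr_criterion; auto. tauto.
Qed.
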